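(* For every $N\ge1$ and every $\alpha\in\mathbb{S}_m$, $w^{St}_{\mathfrak{so}(N)}(\alpha)=\sum_{s:[m]\to\{1,-1\}}\operatorname{sign}(s)\,N^{f(\alpha_s)-1}$, the sum running over all $2^m$ states $s$ of $\alpha$.
   Context: For $1\le i\le N$, $\bar i=N+1-i$, $F_{ij}=E_{ij}-E_{\bar j\bar i}$ ($E_{ij}$ matrix units), spanning $\mathfrak{so}(N)$; $w_{\mathfrak{so}(N)}(\alpha)=\sum_{i_1,\dots,i_m=1}^N F_{i_1i_{\alpha(1)}}\cdots F_{i_mi_{\alpha(m)}}\in U(\mathfrak{so}(N))$. $w^{St}_{\mathfrak{so}(N)}(\alpha)=\frac1N\operatorname{Tr}\rho(w_{\mathfrak{so}(N)}(\alpha))$, where $\rho:U(\mathfrak{so}(N))\to\mathrm{Mat}_N(\mathbb{C})$ extends the standard (matrix) representation. A state of $\alpha\in\mathbb{S}_m$ is a map $s:[m]\to\{1,-1\}$; $\operatorname{sign}(s)=(-1)^{\#s^{-1}(-1)}$. The number $f(\alpha_s)$ is defined as the number of connected components of the following graph $G$ in which every vertex has degree 2: vertices $l^-,l^+$ for $l\in[m]$; ''loop'' edges $l^+\!-\!(l+1)^-$ for $1\le l<m$ and $m^+\!-\!1^-$; and for each $l\in[m]$ an ''arrow'' edge joining the tail point of $l$ with the head point of $\alpha(l)$, where for a leg $l$ with $s(l)=1$ the head point is $l^-$ and the tail point is $l^+$, and for $s(l)=-1$ the head point is $l^+$ and the tail point is $l^-$. (This is the number of boundary components of the possibly non-orientable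 hypermap surface of $\alpha$ in which hyperedge attachments at legs of state $-1$ are half-twisted.) *)

From mathcomp Require Import all_boot all_order all_algebra all_fingroup.
Set Implicit Arguments. Unset Strict Implicit. Unset Printing Implicit Defensive.
Import GRing.Theory Num.Theory.
Local Open Scope ring_scope.

(* Standard representation of so(N): rho(F_ij) = E_ij - E_{jbar ibar},
   with ibar = N+1-i, i.e. rev_ord i on 0-based indices. *)
Definition rhoF (N : nat) (i j : 'I_N) : 'M[rat]_N :=
  delta_mx i j - delta_mx (rev_ord j) (rev_ord i).

(* rho(w_{so(N)}(alpha)) : the image under the (algebra morphism) rho of
   sum_{i_1..i_m} F_{i_1 i_alpha(1)} ... F_{i_m i_alpha(m)}. *)
Definition rho_w (N m : nat) (alpha : 'S_m) : 'M[rat]_N :=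
  \sum_(t : {ffun 'I_m -> 'I_N}) \prod_(l < m) rhoF (t l) (t (alpha l)).

Definition wSt (N m : nat) (alpha : 'S_m) : rat :=
  (N%:R)^-1 * \tr (rho_w N alpha).

Definition state (m : nat) := {ffun 'I_m -> bool}.
Definition state_val m (s : state m) (l : 'I_m) : int := if s l then 1 else -1.

Definition state_sign m (s : state m) : rat :=
  (-1) ^+ #|[set l | state_val s l == -1]|.

(* vertices l^- = (l, false), l^+ = (l, true) *)
Definition vtx (m : nat) := ('I_m * bool)%type.

Definition head_pt m (s : state m) (l : 'I_m) : vtx m :=
  if state_val s l == 1 then (l, false) else (l, true).
Definition tail_pt m (s : state m) (l : 'I_m) : vtx m :=
  if state_val s l == 1 then (l, true) else (l, false).

(* loop edges l^+ -- (l+1)^- (cyclically, m^+ -- 1^-) *)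
Definition loop_edge m (x y : vtx m) : bool :=
  x.2 && (y == (ordS x.1, false)).
Definition arrow_edge m (alpha : 'S_m) (s : state m) (x y : vtx m) : bool :=
  [exists l : 'I_m, (x == tail_pt s l) && (y == head_pt s (alpha l))].

Definition adjG m (alpha : 'S_m) (s : state m) : rel (vtx m) :=
  fun x y => [|| loop_edge x y, loop_edge y x,
               arrow_edge alpha s x y | arrow_edge alpha s y x].

Definition f_comp m (alpha : 'S_m) (s : state m) : nat :=
  #|[set [set y | connect (adjG alpha s) x y] | x : vtx m]|.

From mathcomp Require Import all_boot all_order all_algebra all_fingroup.
Import GRing.Theory Num.Theory.
Set Implicit Arguments. Unset Strict Implicit.

(* Expanding each factor rho(F_{i, alpha i}) = E_{i, alpha i} - E_{bar(alpha i), bar i}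
   turns Tr rho(w(alpha)) into a sum over states s of sign(s) times the number of
   index functions t for which the chosen matrix units chain cyclically, i.e. have
   a product of trace 1.  Label the vertex l^- of G by the row index and l^+ by the
   reversed column index of the unit chosen at leg l: then the labels at the two
   ends of an arrow edge are always reversed (i <-> bar i), and those at the ends of
   a loop edge are exactly when the units chain.  Every vertex of G has one loop
   neighbour and one arrow neighbour, so G is a union of even cycles and is
   bipartite; reversing the labels on one colour class identifies these labellings
   with those constant on components, of which there are N^f(alpha_s). *)

Section EdgeLabellings.
Variables (V T : finType) (e : rel V).

Definition edge_twisted (r : T -> T) : {set {ffun V -> T}} :=
  [set z : {ffun V -> T} | [forall x, forall y, e x y ==> (z y == r (z x))]].

Lemma edge_twistedP r (z : {ffun V -> T}) :
  reflect (forall x y, e x y -> z y = r (z x)) (z \in edge_twisted r).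
Proof.
rewrite inE; apply: (iffP forallP) => [H x y exy | H x].
  by apply/eqP; move/forallP: (H x) => /(_ y) /implyP; apply.
by apply/forallP => y; apply/implyP => /H ->.
Qed.

Lemma card_edge_twisted (c : V -> bool) (r : T -> T) :
  involutive r -> (forall x y, e x y -> c y = ~~ c x) ->
  #|edge_twisted r| = #|edge_twisted id|.
Proof.
move=> rK ce.
pose flip b := if b then r else id.
have flipK b : involutive (flip b) by case: b.
have flip_r b x : flip b (r x) = r (flip b x) by case: b.
have flipN b x : flip (~~ b) x = r (flip b x) by case: b; rewrite //= rK.
pose untwist (z : {ffun V -> T}) := [ffun v => flip (c v) (z v)].
have untwistK : involutive untwist.
  by move=> z; apply/ffunP => v; rewrite !ffunE flipK.
rewrite -[RHS](card_preimset _ (inv_inj untwistK)); apply: eq_card => z.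
rewrite [in RHS]inE; apply/edge_twistedP/edge_twistedP => /= H x y exy.
  by rewrite !ffunE (ce _ _ exy) (H _ _ exy) flipN flip_r rK.
have := H x y exy; rewrite !ffunE (ce _ _ exy) flipN => /(canRL rK).
by rewrite -flip_r => /(inv_inj (flipK _)).
Qed.

Lemma card_edge_invariant (x0 : V) : connect_sym e ->
  #|edge_twisted id| = (#|T| ^ #|[set [set y | connect e x y] | x : V]|)%N.
Proof.
move=> sym_e; set classes := [set _ | x : V].
pose S := {C : {set V} | C \in classes}.
have cls_in x : [set y | connect e x y] \in classes by apply: imset_f.
pose cls x : S := exist (fun C => C \in classes) _ (cls_in x).
have cls_surj (C : S) : exists x, C = cls x.
  by case: C => C /[dup] /imsetP [x _ ->] HC; exists x; apply: val_inj.
pose lift (g : {ffun S -> T}) : {ffun V -> T} := [ffun v => g (cls v)].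
have lift_inj : injective lift.
  move=> g1 g2 /ffunP eq_g; apply/ffunP => C; have [x ->] := cls_surj C.
  by have := eq_g x; rewrite !ffunE.
suff -> : edge_twisted id = lift @: setT.
  by rewrite card_imset // cardsT card_ffun card_sig.
apply/setP => z; apply/edge_twistedP/imsetP => /= [z_inv | [g _ ->] x y exy].
  have z_const x y : connect e x y -> z y = z x.
    have z_closed : closed e [pred w | z w == z x].
      by move=> u w /z_inv /= z_uw; rewrite !inE z_uw.
    by move=> /(closed_connect z_closed); rewrite !inE eqxx => /esym/eqP.
  exists [ffun C : S => z (odflt x0 [pick y in val C])] => //.
  apply/ffunP => v; rewrite !ffunE /=; case: pickP => [y | /(_ v)].
    by rewrite inE => /z_const.
  by rewrite inE connect0.
rewrite !ffunE; congr (g _); apply: val_inj => /=; apply/setP => w.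
by rewrite !inE (same_connect sym_e (connect1 exy)).
Qed.

End EdgeLabellings.

Section AlternatingColouring.
Variables (V : finType) (p q : V -> V).
Hypotheses (pK : involutive p) (qK : involutive q).
Hypotheses (p_neq : forall v, p v != v) (q_neq : forall v, q v != v).

Let rot := q \o p.

Let rot_inj : injective rot.
Proof. exact: inj_comp (inv_inj qK) (inv_inj pK). Qed.

Let rot_sym : connect_sym (frel rot) := fconnect_sym rot_inj.

Let rot_p_rot v : rot (p (rot v)) = p v.
Proof. by rewrite /rot /= pK qK. Qed.

Lemma p_notin_rot_orbit v : ~~ fconnect rot v (p v).
Proof.
suff p_neq_iter k w : (p w != iter k rot w) && (p w != iter k.+1 rot w).
  by apply/negP => /iter_findex orbit_p; have := p_neq_iter (findex rot v (p v)) v;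
     rewrite orbit_p eqxx.
elim: k w => [|k IHk] w; first by rewrite p_neq eq_sym q_neq.
rewrite (andP (IHk w)).2 /=; apply/eqP => pw_iter.
suff : p (rot w) = iter k rot (rot w) by apply/eqP; case/andP: (IHk (rot w)).
by apply: rot_inj; rewrite rot_p_rot pw_iter -iterSr iterS.
Qed.

(* v and p v lie in different rot-orbits, which p swaps; compare their roots. *)
Definition alt_colour v :=
  (enum_rank (froot rot v) < enum_rank (froot rot (p v)))%N.

Lemma alt_colour_p v : alt_colour (p v) = ~~ alt_colour v.
Proof.
rewrite /alt_colour pK -leqNgt [RHS]leq_eqVlt val_eqE (inj_eq enum_rank_inj).
by rewrite (root_connect rot_sym) rot_sym (negbTE (p_notin_rot_orbit v)).
Qed.

Let froot_rot w : froot rot (rot w) = froot rot w.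
Proof. by apply/eqP; rewrite (root_connect rot_sym) rot_sym fconnect1. Qed.

Let alt_colour_rot v : alt_colour (rot v) = alt_colour v.
Proof. by rewrite /alt_colour froot_rot -[froot rot (p _)]froot_rot rot_p_rot. Qed.

Lemma alt_colour_q v : alt_colour (q v) = ~~ alt_colour v.
Proof. by rewrite -{1}(pK v) -/(rot (p v)) alt_colour_rot alt_colour_p. Qed.

End AlternatingColouring.

Local Open Scope ring_scope.

Lemma prod_scalemx (R : comPzRingType) N (I : Type) (r : seq I) (P : pred I)
    (c : I -> R) (A : I -> 'M[R]_N) :
  \prod_(i <- r | P i) (c i *: A i) =
  (\prod_(i <- r | P i) c i) *: \prod_(i <- r | P i) A i.
Proof.
apply: (big_ind3 (fun B a C => B = a *: C)) => [|_ a B _ b C -> ->|//].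
  by rewrite scale1r.
by rewrite -mulmxE -scalemxAl -scalemxAr scalerA.
Qed.

Lemma mxtrace_delta (R : pzRingType) N (i j : 'I_N) :
  \tr (delta_mx i j : 'M[R]_N) = (i == j)%:R.
Proof.
rewrite /mxtrace (bigD1 i) //= big1 => [|k /negPf k_ne]; last by rewrite mxE k_ne.
by rewrite addr0 mxE eqxx eq_sym.
Qed.

Lemma prod_delta_mx (R : pzRingType) N n (a b : nat -> 'I_N) :
  \prod_(l < n.+1) (delta_mx (a l) (b l) : 'M[R]_N) =
  delta_mx (a 0%N) (b n) *+ [forall l : 'I_n, b l == a l.+1].
Proof.
elim: n => [|n IHn]; first by rewrite big_ord1; case: forallP => // -[[]].
rewrite big_ord_recr IHn /= mulrnAl -mulmxE mul_delta_mx_cond -mulrnA.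
by congr (_ *+ _); rewrite mulnb andbC -!(big_andE predT) big_ord_recr.
Qed.

Lemma mxtrace_prod_delta_mx (R : pzRingType) N n (a b : 'I_n.+1 -> 'I_N) :
  \tr (\prod_(l < n.+1) (delta_mx (a l) (b l) : 'M[R]_N)) =
  [forall l, b l == a (ordS l)]%:R.
Proof.
pose a' k := a (inord k); pose b' k := b (inord k).
rewrite (eq_bigr (fun l : 'I_n.+1 => delta_mx (a' l) (b' l))) => [|l _];
  last by rewrite /a' /b' inord_val.
rewrite prod_delta_mx raddfMn /= mxtrace_delta -mulrnA mulnb; congr (_%:R).
have -> : [forall l, b l == a (ordS l)] =
          [forall l : 'I_n.+1, b' l == a' (l.+1 %% n.+1)%N].
  by apply: eq_forallb => l; rewrite /a' /b' inord_val -[ordS l]inord_val.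
rewrite -!(big_andE predT) big_ord_recr /= modnn andbC eq_sym; congr (_ && _).
by apply: eq_bigr => l _; rewrite modn_small // ltnS.
Qed.

Section HypermapGraph.
Variables (m : nat) (alpha : 'S_m) (s : state m).

Lemma head_ptE l : head_pt s l = (l, ~~ s l).
Proof. by rewrite /head_pt /state_val; case: (s l). Qed.

Lemma tail_ptE l : tail_pt s l = (l, s l).
Proof. by rewrite /tail_pt /state_val; case: (s l). Qed.

Lemma eq_head_pt l l' : (head_pt s l == head_pt s l') = (l == l').
Proof. by rewrite !head_ptE xpair_eqE; case: eqP => // ->; rewrite eqxx. Qed.

Lemma eq_tail_pt l l' : (tail_pt s l == tail_pt s l') = (l == l').
Proof. by rewrite !tail_ptE xpair_eqE; case: eqP => // ->; rewrite eqxx. Qed.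

Lemma head_tail_pt_neq l l' : head_pt s l != tail_pt s l'.
Proof.
by rewrite head_ptE tail_ptE xpair_eqE negb_and; case: eqVneq => //= ->; case: (s l').
Qed.

Variant vtx_spec : vtx m -> Type :=
  | HeadPt l : vtx_spec (head_pt s l)
  | TailPt l : vtx_spec (tail_pt s l).

Lemma vtxP v : vtx_spec v.
Proof.
case: v => l b; case: (eqVneq b (s l)) => [-> | /negPf b_ne].
  by rewrite -tail_ptE; constructor.
have -> : b = ~~ s l by case: b b_ne; case: (s l).
by rewrite -head_ptE; constructor.
Qed.

Definition loop_mate (v : vtx m) : vtx m :=
  if v.2 then (ordS v.1, false) else (ord_pred v.1, true).

Definition arrow_mate (v : vtx m) : vtx m :=
  if v == tail_pt s v.1 then head_pt s (alpha v.1)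
  else tail_pt s ((alpha^-1)%g v.1).

Lemma arrow_mate_tail l : arrow_mate (tail_pt s l) = head_pt s (alpha l).
Proof. by rewrite /arrow_mate [in (tail_pt s l).1]tail_ptE eqxx. Qed.

Lemma arrow_mate_head l : arrow_mate (head_pt s l) = tail_pt s ((alpha^-1)%g l).
Proof.
by rewrite /arrow_mate [in (head_pt s l).1]head_ptE (negbTE (head_tail_pt_neq _ _)).
Qed.

Lemma loop_mateK : involutive loop_mate.
Proof. by case=> l []; rewrite /loop_mate /= ?ordSK ?ord_predK. Qed.

Lemma arrow_mateK : involutive arrow_mate.
Proof.
move=> v; case: v / vtxP => l; first by rewrite arrow_mate_head arrow_mate_tail permKV.
by rewrite arrow_mate_tail arrow_mate_head permK.
Qed.

Lemma loop_mate_neq v : loop_mate v != v.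
Proof. by case: v => l []; rewrite /loop_mate xpair_eqE andbF. Qed.

Lemma arrow_mate_neq v : arrow_mate v != v.
Proof.
case: v / vtxP => l; first by rewrite arrow_mate_head eq_sym head_tail_pt_neq.
by rewrite arrow_mate_tail head_tail_pt_neq.
Qed.

Lemma loop_edge_mate x y : loop_edge x y || loop_edge y x = (y == loop_mate x).
Proof.
case: x y => l [] [l' []];
  rewrite /loop_edge /loop_mate /= ?xpair_eqE ?andbT ?andbF ?orbF //=.
by apply/eqP/eqP => [-> | ->]; rewrite ?ordSK ?ord_predK.
Qed.

Lemma arrow_edge_mate x y :
  arrow_edge alpha s x y || arrow_edge alpha s y x = (y == arrow_mate x).
Proof.
case: x / vtxP => l.
  have -> : arrow_edge alpha s (head_pt s l) y = false.
    by apply/negbTE/existsP => -[l']; rewrite (negbTE (head_tail_pt_neq _ _)).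
  rewrite arrow_mate_head; apply/existsP/eqP => [[l'] | ->].
    by case/andP=> /eqP -> /[!eq_head_pt] /eqP ->; rewrite permK.
  by exists ((alpha^-1)%g l); rewrite permKV !eqxx.
have -> : arrow_edge alpha s y (tail_pt s l) = false.
  apply/negbTE/existsP => -[l'].
  by rewrite [tail_pt s l == _]eq_sym (negbTE (head_tail_pt_neq _ _)) andbF.
rewrite orbF arrow_mate_tail; apply/existsP/eqP => [[l'] | ->].
  by case/andP=> /[!eq_tail_pt] /eqP -> /eqP.
by exists l; rewrite !eqxx.
Qed.

Lemma adjG_mates x y :
  adjG alpha s x y = (y == loop_mate x) || (y == arrow_mate x).
Proof. by rewrite -loop_edge_mate -arrow_edge_mate /adjG !orbA. Qed.

Variable N : nat.
Implicit Types t : {ffun 'I_m -> 'I_N}.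

(* The state picks the term E_{t l, t (alpha l)} (s l) or
   -E_{bar (t (alpha l)), bar (t l)} (~~ s l) of rho(F_{t l, t (alpha l)}). *)
Definition row_idx t l := if s l then t l else rev_ord (t (alpha l)).
Definition col_idx t l := if s l then t (alpha l) else rev_ord (t l).

Definition chain t := [forall l, col_idx t l == row_idx t (ordS l)].

Definition vlabel t : {ffun vtx m -> 'I_N} :=
  [ffun v => if v.2 then rev_ord (col_idx t v.1) else row_idx t v.1].

Lemma vlabel_head t l : vlabel t (head_pt s l) = t l.
Proof.
by rewrite head_ptE ffunE /row_idx /col_idx /=; case: (s l); rewrite ?rev_ordK.
Qed.

Lemma vlabel_tail t l : vlabel t (tail_pt s l) = rev_ord (t (alpha l)).
Proof. by rewrite tail_ptE ffunE /row_idx /col_idx /=; case: (s l). Qed.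

Lemma vlabel_arrow_mate t v : vlabel t (arrow_mate v) = rev_ord (vlabel t v).
Proof.
case: v / vtxP => l; first by rewrite arrow_mate_head vlabel_head vlabel_tail permKV.
by rewrite arrow_mate_tail vlabel_head vlabel_tail rev_ordK.
Qed.

Lemma chainP t :
  reflect (forall v, vlabel t (loop_mate v) = rev_ord (vlabel t v)) (chain t).
Proof.
apply: (iffP forallP) => [chain_t [l []] | loop_t l].
- by rewrite !ffunE /= rev_ordK; move/eqP: (chain_t l) => ->.
- by rewrite !ffunE /=; move/eqP: (chain_t (ord_pred l)) => ->; rewrite ord_predK.
- by have := loop_t (l, true); rewrite !ffunE /= rev_ordK => ->.
Qed.

Lemma vlabel_inj : injective vlabel.
Proof. by move=> t1 t2 eq_t; apply/ffunP => l; rewrite -!vlabel_head eq_t. Qed.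

Lemma vlabel_chain :
  vlabel @: [set t | chain t] = edge_twisted (adjG alpha s) (@rev_ord N).
Proof.
apply/setP => z; apply/imsetP/edge_twistedP => [[t] | z_twisted].
  rewrite inE => /chainP chain_t -> x y; rewrite adjG_mates.
  by case/orP=> /eqP ->; rewrite ?chain_t ?vlabel_arrow_mate.
pose t := [ffun l => z (head_pt s l)].
have z_arrow v : z (arrow_mate v) = rev_ord (z v).
  by apply: z_twisted; rewrite adjG_mates eqxx orbT.
have vlabel_t : vlabel t = z.
  apply/ffunP => v; case: v / vtxP => l; rewrite ?vlabel_head ?vlabel_tail ffunE //.
  by rewrite -arrow_mate_tail z_arrow rev_ordK.
exists t => //; rewrite inE; apply/chainP => v; rewrite vlabel_t.
by apply: z_twisted; rewrite adjG_mates eqxx.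
Qed.

Lemma card_chain : (0 < m)%N -> #|[set t | chain t]| = (N ^ f_comp alpha s)%N.
Proof.
move=> m_gt0; rewrite -(card_imset _ vlabel_inj) vlabel_chain.
have colour_adj x y : adjG alpha s x y ->
    alt_colour loop_mate arrow_mate y = ~~ alt_colour loop_mate arrow_mate x.
  have colour_loop := alt_colour_p loop_mateK arrow_mateK loop_mate_neq arrow_mate_neq.
  have colour_arrow := alt_colour_q loop_mateK arrow_mateK loop_mate_neq arrow_mate_neq.
  by rewrite adjG_mates => /orP[] /eqP ->; [apply: colour_loop | apply: colour_arrow].
rewrite (card_edge_twisted (@rev_ordK N) colour_adj).
rewrite (card_edge_invariant _ (Ordinal m_gt0, true)) ?card_ord //.
by apply: sym_connect_sym => x y; rewrite /adjG orbCA [arrow_edge _ _ x y || _]orbC.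
Qed.

End HypermapGraph.

Lemma state_signE m (s : state m) :
  state_sign s = \prod_(l < m) (if s l then 1 else -1).
Proof.
rewrite /state_sign -prodr_const [RHS](bigID s) /= [X in _ = X * _]big1 => [|l -> //].
by rewrite mul1r; apply: eq_big => l; rewrite ?inE /state_val; case: (s l).
Qed.

Lemma rhoF_state_expansion N m (alpha : 'S_m) (t : {ffun 'I_m -> 'I_N}) :
  \prod_(l < m) rhoF (t l) (t (alpha l)) =
  \sum_(s : state m) state_sign s *:
    \prod_(l < m) delta_mx (row_idx alpha s t l) (col_idx alpha s t l).
Proof.
pose unit l (b : bool) : 'M[rat]_N := (if b then 1 else -1) *:
  delta_mx (if b then t l else rev_ord (t (alpha l)))
           (if b then t (alpha l) else rev_ord (t l)).
have rhoF_units l : rhoF (t l) (t (alpha l)) = \sum_(b : bool) unit l b.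
  by rewrite big_bool /unit scale1r scaleN1r.
rewrite (eq_bigr _ (fun l _ => rhoF_units l)) bigA_distr_bigA; apply: eq_bigr => s _.
rewrite state_signE -prod_scalemx; apply: eq_bigr => l _.
by rewrite /unit /row_idx /col_idx; case: (s l).
Qed.

Lemma mxtrace_rho_w N n (alpha : 'S_n.+1) :
  \tr (rho_w N alpha) =
  \sum_(s : state n.+1)
    state_sign s * #|[set t : {ffun 'I_n.+1 -> 'I_N} | chain alpha s t]|%:R.
Proof.
rewrite /rho_w raddf_sum /=.
under eq_bigr do rewrite rhoF_state_expansion raddf_sum.
rewrite exchange_big; apply: eq_bigr => s _ /=.
under eq_bigr do rewrite mxtraceZ mxtrace_prod_delta_mx.
rewrite -mulr_sumr; congr (_ * _); rewrite -sum1_card natr_sum [RHS]big_mkcond.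
by apply: eq_bigr => t _; rewrite inE -[[forall _, _]]/(chain alpha s t); case: chain.
Qed.

Theorem theorem12 (N m : nat) (alpha : 'S_m) :
  (0 < N)%N -> (0 < m)%N ->
  wSt N alpha =
  \sum_(s : state m) state_sign s * (N%:R : rat) ^ ((f_comp alpha s)%:Z - 1).
Proof.
case: m alpha => // n alpha N_gt0 _.
rewrite /wSt mxtrace_rho_w mulr_sumr; apply: eq_bigr => s _.
have N_neq0 : (N%:R : rat) != 0 by rewrite pnatr_eq0 -lt0n.
by rewrite card_chain // natrX mulrCA expfzDr // exprN1 [_^-1 * _]mulrC.
Qed.
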